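(* Let $T$ be a $3$-CET with exactly one flip, with domain $S^1\setminus\{a_0,a_1,a_2\}$ where $0=a_0<a_1<a_2<a_3=1$ and $I_i=(a_{i-1},a_i)$, $i=1,2,3$, such that $I_1$ is the flip of $T$ and $T(I_1)<T(I_3)<T(I_2)$ in the cyclic order. Assume $T$ has no periodic points. Let $N\ge2$ be the least positive integer with $T^N(I_1)\cap I_1\neq\emptyset$ (so that $T^n(I_1)$, $0\le n\le N-1$, are pairwise disjoint). Assume that $a_2\in T^{n_0}(I_1)$ for some $1\le n_0\le N-1$, let $d\in I_1$ be such that $T^{n_0}(d)=a_2$, and write $I_1\setminus\{d\}=I_\ell\cup I_r$ with $I_\ell=(a_0,d)$ and $I_r=(d,a_1)$ (so $I_\ell<I_r$ in $S^1\setminus\{a_2\}$). Then either $a_0\in T^N(I_\ell)$ or $a_1\in T^N(I_r)$.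
   Context: $S^1=[0,1]/(0\sim1)$ with orientation induced by $[0,1]$ and points written as points of $[0,1]$. A $3$-CET is an injective map $T:I_1\cup I_2\cup I_3\to S^1$, where $I_1,I_2,I_3$ are pairwise disjoint open subintervals whose closures cover $S^1$, which is an isometry on each $I_i$ and cannot be continuously extended to a larger open set. A flip is an $I_i$ on which $T$ reverses orientation. For a set $J$, $T^n(J)=\{T^n(x): x\in J\cap\mathrm{Dom}(T^n)\}$. For subintervals $J_1,J_2,J_3$ of $S^1$, $J_1<J_2<J_3$ means every triple in $J_1\times J_2\times J_3$ is cyclically ordered; for subintervals of $S^1\setminus\{p\}$, $J_1<J_2$ refers to the linear order on $S^1\setminus\{p\}$ induced by the cyclic order. A periodic point is $p$ with $T^m(p)=p$ for some $m\ge1$. *)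

From Stdlib Require Import Reals.
Open Scope R_scope.

(* Points of S^1 = [0,1]/(0~1) are represented by reals in [0,1).
   The projection R -> S^1 is frac_part (x - floor x). *)

(* An isometry of an interval into S^1 is x |-> x + c (mod 1)
   (orientation preserving) or x |-> c - x (mod 1) (a flip). *)
Definition piece (flip : bool) (c x : R) : R :=
  if flip then c - x else x + c.

Record CET3 := {
  a1 : R; a2 : R;
  fl1 : bool; fl2 : bool; fl3 : bool;
  c1 : R; c2 : R; c3 : R
}.

Definition I1 (T : CET3) (x : R) : Prop := 0 < x < a1 T.
Definition I2 (T : CET3) (x : R) : Prop := a1 T < x < a2 T.
Definition I3 (T : CET3) (x : R) : Prop := a2 T < x < 1.
Definition Dom (T : CET3) (x : R) : Prop := I1 T x \/ I2 T x \/ I3 T x.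

(* the map itself (only meaningful on Dom T) *)
Definition Tmap (T : CET3) (x : R) : R :=
  if Rlt_dec x (a1 T) then frac_part (piece (fl1 T) (c1 T) x)
  else if Rlt_dec x (a2 T) then frac_part (piece (fl2 T) (c2 T) x)
  else frac_part (piece (fl3 T) (c3 T) x).

(* well-formedness of a 3-CET: partition points, injectivity,
   and non-extendability: at each a_i the two one-sided limits
   (as points of S^1) differ, so T has no continuous extension there. *)
Definition is_CET3 (T : CET3) : Prop :=
  0 < a1 T < a2 T /\ a2 T < 1 /\
  (forall x y, Dom T x -> Dom T y -> Tmap T x = Tmap T y -> x = y) /\
  frac_part (piece (fl3 T) (c3 T) 1) <> frac_part (piece (fl1 T) (c1 T) 0) /\
  frac_part (piece (fl1 T) (c1 T) (a1 T)) <> frac_part (piece (fl2 T) (c2 T) (a1 T)) /\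
  frac_part (piece (fl2 T) (c2 T) (a2 T)) <> frac_part (piece (fl3 T) (c3 T) (a2 T)).

Definition iterT (T : CET3) (n : nat) (x : R) : R := Nat.iter n (Tmap T) x.

Definition DomN (T : CET3) (n : nat) (x : R) : Prop :=
  forall k, (k < n)%nat -> Dom T (iterT T k x).

Definition img (T : CET3) (n : nat) (J : R -> Prop) (y : R) : Prop :=
  exists x, J x /\ DomN T n x /\ iterT T n x = y.

Definition cyc (x y z : R) : Prop :=
  (x < y < z) \/ (y < z < x) \/ (z < x < y).

Definition cyc_sets (J1 J2 J3 : R -> Prop) : Prop :=
  forall x y z, J1 x -> J2 y -> J3 z -> cyc x y z.

Definition has_periodic_point (T : CET3) : Prop :=
  exists p m, (1 <= m)%nat /\ DomN T m p /\ iterT T m p = p.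

Definition meets (J K : R -> Prop) : Prop := exists x, J x /\ K x.

From Stdlib Require Import Reals Lra Lia.
Open Scope R_scope.

(* The images T^k(I1), 0 <= k < N, are pairwise disjoint.  Hence every point of I1 except d
   stays in the domain up to time N, and up to time n0 all of I1 is moved rigidly, so that
   T^n0(x) = a2 + d - x.  The cyclic order T(I1) < T(I3) < T(I2) forces the three images to tile
   the circle, T(I3) starting where T(I1) ends and T(I2) ending where T(I1) starts; therefore
   T^(n0+1)(I_l) abuts T(I_l) and T(I_r) abuts T^(n0+1)(I_r).  Two abutting arcs whose union
   avoids I1 and the cut points are moved together by one rotation, so the abutment persists up
   to times N - n0 and N.  If T^N(I_l) meets I1 then, since T^(N-n0)(I_l) misses I1 and T has
   no periodic point, the arc T^N(I_l) must run over a0 = 0; symmetrically, if T^N(I_r) meets I1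
   it must contain a1. *)

Definition eq_mod1 (a b : R) : Prop := exists z : Z, a - b = IZR z.

Lemma frac_part_range r : 0 <= frac_part r < 1.
Proof. destruct (base_fp r); lra. Qed.

Lemma eq_mod1_frac_part r : eq_mod1 r (frac_part r).
Proof. exists (Int_part r). unfold frac_part. lra. Qed.

Lemma frac_part_unique r y : 0 <= y < 1 -> eq_mod1 r y -> frac_part r = y.
Proof. intros Hy [z Hz]. symmetry. apply (Int_part_frac_part_spec r z y Hy). lra. Qed.

Lemma frac_part_id y : 0 <= y < 1 -> frac_part y = y.
Proof. intros Hy. apply frac_part_unique; [exact Hy|]. exists 0%Z. simpl. lra. Qed.

Lemma eq_mod1_unit a b : 0 <= a < 1 -> 0 <= b < 1 -> eq_mod1 a b -> a = b.
Proof. intros Ha Hb H. rewrite <- (frac_part_id a Ha). apply frac_part_unique; assumption. Qed.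

Lemma frac_part_eq_mod1 a b : eq_mod1 a b -> frac_part a = frac_part b.
Proof.
  intros [z Hz]. apply frac_part_unique; [apply frac_part_range|].
  destruct (eq_mod1_frac_part b) as [w Hw]. exists (z + w)%Z. rewrite plus_IZR. lra.
Qed.

Lemma frac_part_add_frac c x : frac_part (frac_part c + x) = frac_part (c + x).
Proof.
  apply frac_part_eq_mod1. destruct (eq_mod1_frac_part c) as [z Hz].
  exists (- z)%Z. rewrite opp_IZR. lra.
Qed.

Lemma frac_part_sub_frac c x : frac_part (frac_part c - x) = frac_part (c - x).
Proof. apply frac_part_add_frac. Qed.

Lemma frac_part_add_int c z : frac_part (c + IZR z) = frac_part c.
Proof. apply frac_part_eq_mod1. exists z. lra. Qed.

Lemma frac_part_zero_eq_mod1 r : frac_part r = 0 -> eq_mod1 r 0.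
Proof. intros H. destruct (fp_nat r H) as [z ->]. exists z. lra. Qed.

Lemma Rpos_min a b : 0 < a -> 0 < b -> exists e, 0 < e /\ e <= a /\ e <= b.
Proof.
  intros Ha Hb. exists (Rmin a b).
  split; [apply Rmin_glb_lt; assumption | split; [apply Rmin_l | apply Rmin_r]].
Qed.

Lemma frac_part_no_wrap c u v :
  (forall t, u < t < v -> frac_part (c - t) <> 0) ->
  exists c', forall t, u < t < v -> frac_part (c - t) = c' - t.
Proof.
  intros Hnz.
  assert (Hnlt : forall t1 t2, u < t1 < v -> u < t2 < v ->
            ~ (Int_part (c - t1) < Int_part (c - t2))%Z).
  { intros t1 t2 H1 H2 Hlt.
    pose proof (base_Int_part (c - t1)) as [_ B1]. pose proof (base_Int_part (c - t2)) as [B2 _].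
    assert (Hz : (Int_part (c - t1) + 1 <= Int_part (c - t2))%Z) by lia.
    apply IZR_le in Hz. rewrite plus_IZR in Hz.
    apply (Hnz (c - IZR (Int_part (c - t1) + 1))); [rewrite plus_IZR; lra|].
    replace (c - (c - IZR (Int_part (c - t1) + 1))) with (0 + IZR (Int_part (c - t1) + 1)) by ring.
    rewrite frac_part_add_int. apply fp_R0. }
  destruct (Rlt_dec u v) as [Huv|Huv]; [|exists 0; intros; lra].
  set (t0 := (u + v) / 2). assert (Ht0 : u < t0 < v) by (unfold t0; lra).
  exists (c - IZR (Int_part (c - t0))). intros t Ht.
  assert (E : Int_part (c - t) = Int_part (c - t0)).
  { destruct (Z.lt_total (Int_part (c - t)) (Int_part (c - t0))) as [L|[L|L]];
      [exfalso; exact (Hnlt t t0 Ht Ht0 L) | exact L | exfalso; exact (Hnlt t0 t Ht0 Ht L)]. }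
  unfold frac_part. rewrite E. ring.
Qed.

Lemma frac_part_sub_inj y y' e : 0 <= y < 1 -> 0 <= y' < 1 ->
  frac_part (y - e) = frac_part (y' - e) -> y = y'.
Proof.
  intros Hy Hy' E. apply eq_mod1_unit; [exact Hy|exact Hy'|].
  destruct (eq_mod1_frac_part (y - e)) as [z1 Hz1].
  destruct (eq_mod1_frac_part (y' - e)) as [z2 Hz2].
  exists (z1 - z2)%Z. rewrite minus_IZR. lra.
Qed.

Lemma frac_part_sub_cases y e : 0 <= y < 1 -> 0 <= e < 1 ->
  frac_part (y - e) = if Rle_dec e y then y - e else y - e + 1.
Proof.
  intros Hy He. destruct (Rle_dec e y).
  - apply frac_part_id. lra.
  - apply frac_part_unique; [lra|]. exists (-1)%Z. simpl. lra.
Qed.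

Lemma cyc_rotate x y z e : 0 <= x < 1 -> 0 <= y < 1 -> 0 <= z < 1 -> 0 <= e < 1 ->
  cyc x y z -> cyc (frac_part (x - e)) (frac_part (y - e)) (frac_part (z - e)).
Proof.
  intros Hx Hy Hz He Hc. rewrite !frac_part_sub_cases by assumption.
  unfold cyc in *. repeat destruct Rle_dec; lra.
Qed.

Lemma arc_before_end_arc x L a : 0 <= x < 1 -> 0 < L -> 0 < a ->
  (forall t t', 0 < t < L -> 0 < t' < a -> frac_part (x + t) <> 1 - t') ->
  x + L <= 1 - a.
Proof.
  intros Hx HL Ha Hmiss. apply Rnot_lt_le. intros Hlt.
  assert (Hgap : Rmax 0 (1 - a - x) < Rmin L (1 - x))
    by (apply Rmax_lub_lt; apply Rmin_glb_lt; lra).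
  pose proof (Rmax_l 0 (1 - a - x)). pose proof (Rmax_r 0 (1 - a - x)).
  pose proof (Rmin_l L (1 - x)). pose proof (Rmin_r L (1 - x)).
  set (t := (Rmax 0 (1 - a - x) + Rmin L (1 - x)) / 2) in *.
  assert (Ht : 0 < t < L /\ 1 - a - x < t < 1 - x) by (unfold t; lra).
  apply (Hmiss t (1 - x - t)); [lra|lra|]. rewrite frac_part_id; lra.
Qed.

Lemma arcs_tile a L2 L3 u w : 0 < a -> 0 < L2 -> 0 < L3 -> a + L2 + L3 = 1 ->
  0 <= u < 1 -> 0 <= w < 1 ->
  (forall t t', 0 < t < L3 -> 0 < t' < a -> frac_part (u + t) <> 1 - t') ->
  (forall s t', 0 < s < L2 -> 0 < t' < a -> frac_part (w + s) <> 1 - t') ->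
  (forall t' t s, 0 < t' < a -> 0 < t < L3 -> 0 < s < L2 ->
     cyc (1 - t') (frac_part (u + t)) (frac_part (w + s))) ->
  u = 0 /\ w = L3.
Proof.
  intros Ha H2 H3 Hsum Hu Hw Hmiss3 Hmiss2 Hcyc.
  pose proof (arc_before_end_arc u L3 a Hu H3 Ha Hmiss3) as Hu3.
  pose proof (arc_before_end_arc w L2 a Hw H2 Ha Hmiss2) as Hw2.
  assert (Hlt : forall t s, 0 < t < L3 -> 0 < s < L2 -> u + t < w + s).
  { intros t s Ht Hs. pose proof (Hcyc (a / 2) t s ltac:(lra) Ht Hs) as Hc.
    rewrite !frac_part_id in Hc by lra. unfold cyc in Hc. lra. }
  assert (u + L3 <= w).
  { apply Rnot_lt_le. intros Hgt.
    destruct (Rpos_min L2 L3) as (e & He & He2 & He3); [lra|lra|].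
    destruct (Rpos_min e (u + L3 - w)) as (h & Hh & Hhe & Hhw); [lra|lra|].
    pose proof (Hlt (L3 - h / 3) (h / 3)). lra. }
  lra.
Qed.

Lemma iterT_S T k x : iterT T (S k) x = Tmap T (iterT T k x).
Proof. reflexivity. Qed.

Lemma iterT_add T a b x : iterT T (a + b) x = iterT T a (iterT T b x).
Proof. apply Nat.iter_add. Qed.

Lemma DomN_0 T x : DomN T 0 x.
Proof. intros k Hk. lia. Qed.

Lemma DomN_S T k x : DomN T (S k) x <-> DomN T k x /\ Dom T (iterT T k x).
Proof.
  split.
  - intros H. split; [intros j Hj|]; apply H; lia.
  - intros [H Hk] j Hj. destruct (Nat.eq_dec j k) as [->|]; [exact Hk|apply H; lia].
Qed.

Lemma DomN_le T k m x : (k <= m)%nat -> DomN T m x -> DomN T k x.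
Proof. intros Hkm H j Hj. apply H. lia. Qed.

Lemma DomN_add T a b x : DomN T (a + b) x -> DomN T b x /\ DomN T a (iterT T b x).
Proof.
  intros H. split; intros j Hj; [|rewrite <- iterT_add]; apply H; lia.
Qed.

Lemma img_1 T (J : R -> Prop) x : J x -> Dom T x -> img T 1 J (Tmap T x).
Proof.
  intros HJ HD. exists x. split; [exact HJ|]. split; [|reflexivity].
  apply DomN_S. split; [apply DomN_0|exact HD].
Qed.

Lemma Tmap_range T x : 0 <= Tmap T x < 1.
Proof. unfold Tmap. repeat destruct Rlt_dec; apply frac_part_range. Qed.

Lemma iterT_range T k x : (1 <= k)%nat -> 0 <= iterT T k x < 1.
Proof. intros Hk. destruct k as [|k]; [lia|]. apply Tmap_range. Qed.

Lemma iterT_inj T k x y : is_CET3 T -> DomN T k x -> DomN T k y ->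
  iterT T k x = iterT T k y -> x = y.
Proof.
  intros (_ & _ & Hinj & _). revert x y.
  induction k as [|k IH]; intros x y Hx Hy E; [exact E|].
  apply DomN_S in Hx as [Hx Hx']. apply DomN_S in Hy as [Hy Hy'].
  apply IH; auto.
Qed.

Lemma piece_add fl c y h : piece fl c (y + h) = piece fl c y + (if fl then - h else h).
Proof. destruct fl; simpl; ring. Qed.

Definition glued_arcs (f g : R -> R) (u v u' v' c : R) : Prop :=
  (forall x, u < x < v -> f x = frac_part (c + (v - x))) /\
  (forall x, u' < x < v' -> g x = frac_part (c - (x - u'))).

Section OneFlip.

Variable T : CET3.
Hypothesis cuts : 0 < a1 T /\ a1 T < a2 T /\ a2 T < 1.
Hypothesis flip1 : fl1 T = true.
Hypothesis noflip2 : fl2 T = false.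
Hypothesis noflip3 : fl3 T = false.

Lemma Dom_range y : Dom T y -> 0 < y < 1.
Proof. intros [H|[H|H]]; unfold I1, I2, I3 in H; lra. Qed.

Lemma Dom_or_cut y : 0 <= y < 1 -> Dom T y \/ y = 0 \/ y = a1 T \/ y = a2 T.
Proof.
  intros Hy. unfold Dom, I1, I2, I3.
  destruct (Rtotal_order y 0) as [?|[?|?]]; [lra|now right; left|].
  destruct (Rtotal_order y (a1 T)) as [?|[?|?]]; [left; lra|now right; right; left|].
  destruct (Rtotal_order y (a2 T)) as [?|[?|?]]; [left; lra|now right; right; right|left; lra].
Qed.

Lemma not_Dom_a2 : ~ Dom T (a2 T).
Proof. unfold Dom, I1, I2, I3. lra. Qed.

Lemma Dom_piece y : Dom T y -> exists u v fl c, u < y < v /\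
  forall z, u < z < v -> Dom T z /\ Tmap T z = frac_part (piece fl c z).
Proof.
  unfold Dom, Tmap. intros [H|[H|H]]; unfold I1, I2, I3 in H.
  - exists 0, (a1 T), (fl1 T), (c1 T). split; [lra|]. intros z Hz.
    split; [left; unfold I1; lra|]. destruct Rlt_dec; [reflexivity|lra].
  - exists (a1 T), (a2 T), (fl2 T), (c2 T). split; [lra|]. intros z Hz.
    split; [right; left; unfold I2; lra|].
    destruct Rlt_dec; [lra|]. destruct Rlt_dec; [reflexivity|lra].
  - exists (a2 T), 1, (fl3 T), (c3 T). split; [lra|]. intros z Hz.
    split; [right; right; unfold I3; lra|].
    destruct Rlt_dec; [lra|]. destruct Rlt_dec; [lra|reflexivity].
Qed.

Lemma Tmap_local_isometry y : Dom T y ->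
  exists e, 0 < e /\ exists s, (s = 1 \/ s = -1) /\
  forall h, - e < h < e -> Dom T (y + h) /\ Tmap T (y + h) = frac_part (Tmap T y + s * h).
Proof.
  intros Hy. destruct (Dom_piece y Hy) as (u & v & fl & c & Huv & Hp).
  destruct (Rpos_min (y - u) (v - y)) as (e & He & Heu & Hev); [lra|lra|].
  exists e. split; [exact He|]. exists (if fl then -1 else 1). split; [destruct fl; auto|].
  intros h Hh. destruct (Hp (y + h)) as [HD ->]; [lra|]. split; [exact HD|].
  rewrite (proj2 (Hp y Huv)), frac_part_add_frac, piece_add. destruct fl; f_equal; ring.
Qed.

Lemma iterT_local_isometry k x : 0 < x < 1 -> DomN T k x ->
  exists e, 0 < e /\ exists s, (s = 1 \/ s = -1) /\
  forall h, - e < h < e ->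
    DomN T k (x + h) /\ iterT T k (x + h) = frac_part (iterT T k x + s * h).
Proof.
  intros Hx. induction k as [|k IH]; intros HD.
  - destruct (Rpos_min x (1 - x)) as (e & He & H1 & H2); [lra|lra|].
    exists e. split; [exact He|]. exists 1. split; [now left|].
    intros h Hh. split; [apply DomN_0|]. simpl. rewrite frac_part_id; lra.
  - apply DomN_S in HD as [HD Hy]. set (y := iterT T k x) in *.
    destruct (IH HD) as (e & He & s & Hs & Hloc).
    destruct (Tmap_local_isometry y Hy) as (e' & He' & s' & Hs' & Hloc').
    destruct (Rpos_min e e') as (e'' & He'' & H1 & H2); [lra|lra|].
    exists e''. split; [exact He''|]. exists (s' * s).
    split; [destruct Hs, Hs'; subst; [left|right|right|left]; ring|].
    intros h Hh. destruct (Hloc h) as [HDh Eh]; [lra|].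
    destruct (Hloc' (s * h)) as [HDy Ey]; [destruct Hs; subst; lra|].
    assert (Efr : frac_part (y + s * h) = y + s * h)
      by (apply frac_part_id; pose proof (Dom_range _ HDy); lra).
    split.
    + apply DomN_S. split; [exact HDh|]. rewrite Eh, Efr. exact HDy.
    + change (Tmap T (iterT T k (x + h)) = frac_part (Tmap T y + s' * s * h)).
      rewrite Eh, Efr, Ey. f_equal. ring.
Qed.

Lemma Tmap_I1 x : I1 T x -> Tmap T x = frac_part (c1 T - x).
Proof. intros [H1 H2]. unfold Tmap. rewrite flip1. destruct Rlt_dec; [reflexivity|lra]. Qed.

Lemma Tmap_I2 x : I2 T x -> Tmap T x = frac_part (x + c2 T).
Proof.
  intros [H1 H2]. unfold Tmap. rewrite noflip2.
  destruct Rlt_dec; [lra|]. destruct Rlt_dec; [reflexivity|lra].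
Qed.

Lemma Tmap_I3 x : I3 T x -> Tmap T x = frac_part (x + c3 T).
Proof.
  intros [H1 H2]. unfold Tmap. rewrite noflip3.
  destruct Rlt_dec; [lra|]. destruct Rlt_dec; [lra|reflexivity].
Qed.

(* An arc avoiding I1 and the cut points lies in I2 or in I3, where T is a rotation. *)
Lemma Tmap_arc c u v :
  (forall t, u < t < v -> Dom T (frac_part (c - t)) /\ ~ I1 T (frac_part (c - t))) ->
  exists c', forall t, u < t < v -> Tmap T (frac_part (c - t)) = frac_part (c' - t).
Proof.
  intros Harc.
  destruct (frac_part_no_wrap c u v) as [c0 Hc0].
  { intros t Ht E. pose proof (Dom_range _ (proj1 (Harc t Ht))). lra. }
  assert (Hin : forall t, u < t < v -> a1 T < c0 - t < 1 /\ c0 - t <> a2 T).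
  { intros t Ht. destruct (Harc t Ht) as [HD HI1]. rewrite Hc0 in HD, HI1 by exact Ht.
    split; [|intros E; rewrite E in HD; exact (not_Dom_a2 HD)].
    destruct HD as [H|[H|H]]; unfold I1, I2, I3 in *; lra. }
  destruct (Rle_dec (c0 - u) (a2 T)) as [Hle|Hgt].
  - exists (c0 + c2 T). intros t Ht. destruct (Hin t Ht) as [Hr _].
    rewrite Hc0, Tmap_I2 by (unfold I2; lra || exact Ht). f_equal. ring.
  - assert (Hge : a2 T <= c0 - v).
    { apply Rnot_lt_le. intros Hlt. apply (proj2 (Hin (c0 - a2 T) ltac:(lra))). ring. }
    exists (c0 + c3 T). intros t Ht. destruct (Hin t Ht) as [Hr Hne].
    rewrite Hc0, Tmap_I3 by (unfold I3; lra || exact Ht). f_equal. ring.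
Qed.

Lemma glued_arcs_Tmap f g u v u' v' c :
  u < v -> u' < v' -> v - u <= a1 T -> frac_part c <> a2 T ->
  (forall x, u < x < v -> Dom T (f x) /\ ~ I1 T (f x)) ->
  (forall x, u' < x < v' -> Dom T (g x) /\ ~ I1 T (g x)) ->
  glued_arcs f g u v u' v' c ->
  exists c', glued_arcs (fun x => Tmap T (f x)) (fun x => Tmap T (g x)) u v u' v' c'.
Proof.
  intros Huv Huv' Hlen Ha2 Hf Hg [Ef Eg].
  pose proof (frac_part_range c) as Hp.
  assert (Hp0 : frac_part c <> 0).
  { intros E. set (x := (u + v) / 2). apply (proj2 (Hf x ltac:(unfold x; lra))).
    rewrite Ef, <- frac_part_add_frac, E, Rplus_0_l, frac_part_id; unfold I1, x; lra. }
  assert (Hpa1 : a1 T < frac_part c).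
  { apply Rnot_le_lt. intros Hle.
    destruct (Rpos_min (frac_part c) (v' - u')) as (e & He & Hep & Hev); [lra|lra|].
    set (x := u' + e / 2). apply (proj2 (Hg x ltac:(unfold x; lra))).
    rewrite Eg by (unfold x; lra). unfold Rminus at 1.
    rewrite <- frac_part_add_frac, frac_part_id; unfold I1, x; lra. }
  destruct (Tmap_arc c (u - v) (v' - u')) as [c' Hc'].
  { intros t Ht. destruct (Rtotal_order t 0) as [Hneg|[H0|Hpos]].
    - replace (c - t) with (c + (v - (t + v))) by ring. rewrite <- Ef by lra. apply Hf. lra.
    - subst t. rewrite Rminus_0_r. unfold Dom, I1, I2, I3.
      destruct (Rtotal_order (frac_part c) (a2 T)) as [Hlt|[Heq|Hgt]]; [lra|contradiction|lra].
    - replace (c - t) with (c - ((t + u') - u')) by ring. rewrite <- Eg by lra. apply Hg. lra. }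
  exists c'. split.
  - intros x Hx. rewrite Ef by exact Hx. replace (c + (v - x)) with (c - (x - v)) by ring.
    rewrite Hc' by lra. f_equal. ring.
  - intros x Hx. rewrite Eg by exact Hx. apply Hc'. lra.
Qed.

(* T(I3) begins where T(I1) ends, and T(I2) ends where T(I1) begins. *)
Lemma Tmap_images_glued :
  (forall x y, Dom T x -> Dom T y -> Tmap T x = Tmap T y -> x = y) ->
  cyc_sets (img T 1 (I1 T)) (img T 1 (I3 T)) (img T 1 (I2 T)) ->
  eq_mod1 (a2 T + c3 T) (c1 T) /\ eq_mod1 (a2 T + c2 T) (c1 T - a1 T).
Proof.
  intros Hinj Hcyc.
  set (e := frac_part (c1 T)). pose proof (frac_part_range (c1 T)) as He.
  destruct (eq_mod1_frac_part (c1 T)) as [k Hk]. fold e in Hk.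
  set (rho y := frac_part (y - e)).
  set (u := frac_part (a2 T + c3 T - e)). set (w := frac_part (a1 T + c2 T - e)).
  assert (R1 : forall t, 0 < t < a1 T -> rho (Tmap T t) = 1 - t).
  { intros t Ht. unfold rho. rewrite Tmap_I1 by (unfold I1; lra).
    rewrite frac_part_sub_frac.
    apply frac_part_unique; [lra|]. exists (k - 1)%Z. rewrite minus_IZR. simpl. lra. }
  assert (R3 : forall t, 0 < t < 1 - a2 T -> rho (Tmap T (a2 T + t)) = frac_part (u + t)).
  { intros t Ht. unfold rho, u. rewrite Tmap_I3 by (unfold I3; lra).
    rewrite frac_part_sub_frac, frac_part_add_frac. f_equal. ring. }
  assert (R2 : forall s, 0 < s < a2 T - a1 T -> rho (Tmap T (a1 T + s)) = frac_part (w + s)).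
  { intros s Hs. unfold rho, w. rewrite Tmap_I2 by (unfold I2; lra).
    rewrite frac_part_sub_frac, frac_part_add_frac. f_equal. ring. }
  assert (Hrho : forall y y', Dom T y -> Dom T y' -> rho (Tmap T y) = rho (Tmap T y') -> y = y')
    by (intros y y' Hy Hy' E; apply Hinj, (frac_part_sub_inj _ _ e); auto using Tmap_range).
  destruct (arcs_tile (a1 T) (a2 T - a1 T) (1 - a2 T) u w) as [Hu Hw];
    try apply frac_part_range; try lra.
  - intros t t' Ht Ht' E. rewrite <- (R3 t Ht), <- (R1 t' Ht') in E.
    apply Hrho in E; unfold Dom, I1, I2, I3; lra.
  - intros s t' Hs Ht' E. rewrite <- (R2 s Hs), <- (R1 t' Ht') in E.
    apply Hrho in E; unfold Dom, I1, I2, I3; lra.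
  - intros t' t s Ht' Ht Hs. rewrite <- (R1 t' Ht'), <- (R3 t Ht), <- (R2 s Hs).
    apply cyc_rotate; [apply Tmap_range | apply Tmap_range | apply Tmap_range | exact He |].
    apply Hcyc; apply img_1; unfold Dom, I1, I2, I3; lra.
  - unfold u in Hu. destruct (frac_part_zero_eq_mod1 _ Hu) as [z Hz].
    destruct (eq_mod1_frac_part (a1 T + c2 T - e)) as [z' Hz']. fold w in Hz'. rewrite Hw in Hz'.
    split; [exists (z - k)%Z | exists (z' + 1 - k)%Z];
      rewrite ?minus_IZR, ?plus_IZR; simpl; lra.
Qed.

End OneFlip.

Section FirstReturn.

Variables (T : CET3) (N n0 : nat) (d : R).
Hypothesis HT : is_CET3 T.
Hypothesis flip1 : fl1 T = true.
Hypothesis noflip2 : fl2 T = false.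
Hypothesis noflip3 : fl3 T = false.
Hypothesis images_order : cyc_sets (img T 1 (I1 T)) (img T 1 (I3 T)) (img T 1 (I2 T)).
Hypothesis no_periodic : ~ has_periodic_point T.
Hypothesis first_return : forall n, (1 <= n)%nat -> (n < N)%nat -> ~ meets (img T n (I1 T)) (I1 T).
Hypothesis n0_pos : (1 <= n0)%nat.
Hypothesis n0_lt_N : (n0 < N)%nat.
Hypothesis d_I1 : I1 T d.
Hypothesis d_DomN : DomN T n0 d.
Hypothesis d_hits_a2 : iterT T n0 d = a2 T.

Let inj : forall x y, Dom T x -> Dom T y -> Tmap T x = Tmap T y -> x = y.
Proof. apply HT. Qed.

Let cuts : 0 < a1 T /\ a1 T < a2 T /\ a2 T < 1.
Proof. destruct HT as ((? & ?) & ? & _). lra. Qed.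

Lemma iter_I1_not_I1 k x : (1 <= k)%nat -> (k < N)%nat -> I1 T x -> DomN T k x ->
  ~ I1 T (iterT T k x).
Proof.
  intros Hk HkN Hx HD HI. apply (first_return k Hk HkN).
  exists (iterT T k x). split; [exists x; auto|exact HI].
Qed.

Lemma iter_I1_disjoint k k' x x' : (k < k')%nat -> (k' < N)%nat ->
  I1 T x -> I1 T x' -> DomN T k x -> DomN T k' x' -> iterT T k x <> iterT T k' x'.
Proof.
  intros Hlt HN Hx Hx' HD HD' E.
  replace k' with (k + (k' - k))%nat in HD', E by lia.
  apply DomN_add in HD' as [HD1 HD2]. rewrite iterT_add in E.
  apply (iterT_inj T k) in E; [|exact HT|exact HD|exact HD2].
  apply (iter_I1_not_I1 (k' - k) x'); [lia|lia|exact Hx'|exact HD1|]. rewrite <- E. exact Hx.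
Qed.

Lemma iter_I1_local_isometry k x : I1 T x -> DomN T k x ->
  exists e, 0 < e /\ exists s, (s = 1 \/ s = -1) /\
  forall h, - e < h < e ->
    I1 T (x + h) /\ DomN T k (x + h) /\ iterT T k (x + h) = frac_part (iterT T k x + s * h).
Proof.
  intros Hx HD. unfold I1 in Hx.
  destruct (iterT_local_isometry T cuts k x ltac:(lra) HD) as (e & He & s & Hs & Hloc).
  destruct (Rpos_min x (a1 T - x)) as (e1 & He1 & H1 & H2); [lra|lra|].
  destruct (Rpos_min e e1) as (e' & He' & H3 & H4); [lra|lra|].
  exists e'. split; [exact He'|]. exists s. split; [exact Hs|].
  intros h Hh. split; [unfold I1; lra|]. apply Hloc. lra.
Qed.

(* A point of I1 can only leave Dom before time N by hitting a2, and only d does so, at time n0: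
   near 0 or a1 the orbit of a neighbouring point would re-enter I1, and a second visit of a2
   would make two of the disjoint images T^k(I1) overlap. *)
Lemma iter_I1_Dom k x : (1 <= k)%nat -> (k < N)%nat -> I1 T x -> DomN T k x ->
  (k = n0 -> x <> d) -> Dom T (iterT T k x).
Proof.
  intros Hk HkN Hx HD Hd.
  destruct (iter_I1_local_isometry k x Hx HD) as (e & He & s & Hs & Hloc).
  assert (Hs2 : s * s = 1) by (destruct Hs; subst; ring).
  assert (He1 : e < a1 T).
  { destruct (Hloc (e / 2)) as [[_ ?] _]; [lra|]. destruct (Hloc (- (e / 2))) as [[? _] _]; lra. }
  destruct (Dom_or_cut T _ (iterT_range T k x Hk)) as [HDom|[H0|[Ha1|Ha2]]];
    [exact HDom|exfalso..].
  - destruct (Hloc (s * (e / 2))) as (HI & HDh & Eh); [destruct Hs; subst; lra|].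
    apply (iter_I1_not_I1 k _ Hk HkN HI HDh).
    rewrite Eh, H0, Rplus_0_l, <- Rmult_assoc, Hs2, Rmult_1_l, frac_part_id; unfold I1; lra.
  - destruct (Hloc (- s * (e / 2))) as (HI & HDh & Eh); [destruct Hs; subst; lra|].
    apply (iter_I1_not_I1 k _ Hk HkN HI HDh).
    rewrite Eh, Ha1. replace (a1 T + s * (- s * (e / 2))) with (a1 T - e / 2)
      by (destruct Hs; subst; ring).
    rewrite frac_part_id; unfold I1; lra.
  - assert (Hkn0 : k <> n0).
    { intros ->. apply (Hd eq_refl). apply (iterT_inj T n0); auto. congruence. }
    destruct (iter_I1_local_isometry n0 d d_I1 d_DomN) as (e' & He' & s' & Hs' & Hloc').
    destruct (Rpos_min e e') as (t & Ht & Hte & Hte'); [lra|lra|].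
    destruct (Hloc (s * (t / 2))) as (HI & HDh & Eh); [destruct Hs; subst; lra|].
    destruct (Hloc' (s' * (t / 2))) as (HI' & HDh' & Eh'); [destruct Hs'; subst; lra|].
    assert (E : iterT T k (x + s * (t / 2)) = iterT T n0 (d + s' * (t / 2))).
    { rewrite Eh, Eh', Ha2, d_hits_a2, <- !Rmult_assoc, Hs2.
      f_equal. destruct Hs'; subst; ring. }
    destruct (Nat.lt_total k n0) as [Hlt|[Heq|Hgt]]; [|contradiction|].
    + exact (iter_I1_disjoint _ _ _ _ Hlt n0_lt_N HI HI' HDh HDh' E).
    + exact (iter_I1_disjoint _ _ _ _ Hgt HkN HI' HI HDh' HDh (eq_sym E)).
Qed.

Lemma iter_I1_DomN k x : (k <= N)%nat -> I1 T x -> ((n0 < k)%nat -> x <> d) -> DomN T k x.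
Proof.
  intros HkN Hx Hd. induction k as [|k IH]; [apply DomN_0|].
  assert (HD : DomN T k x) by (apply IH; [lia|intros; apply Hd; lia]).
  apply DomN_S. split; [exact HD|].
  destruct k as [|k]; [left; exact Hx|].
  apply iter_I1_Dom; [lia|lia|exact Hx|exact HD|intros Hn0; apply Hd; lia].
Qed.

Lemma iter_I1_Dom_not_I1 k x : (1 <= k)%nat -> (k < N)%nat -> I1 T x ->
  ((n0 <= k)%nat -> x <> d) -> Dom T (iterT T k x) /\ ~ I1 T (iterT T k x).
Proof.
  intros Hk HkN Hx Hd.
  assert (HD : DomN T (S k) x) by (apply iter_I1_DomN; [lia|exact Hx|intros; apply Hd; lia]).
  apply DomN_S in HD as [HD HDk]. split; [exact HDk|].
  exact (iter_I1_not_I1 k x Hk HkN Hx HD).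
Qed.

Lemma iter_I1_flip k : (1 <= k)%nat -> (k <= n0)%nat ->
  exists c, forall x, I1 T x -> iterT T k x = frac_part (c - x).
Proof.
  induction k as [|k IH]; intros Hk Hkn0; [lia|].
  destruct (Nat.eq_dec k 0) as [->|Hk0].
  { exists (c1 T). exact (Tmap_I1 T flip1). }
  destruct IH as [c Hc]; [lia|lia|].
  destruct (Tmap_arc T cuts noflip2 noflip3 c 0 (a1 T)) as [c' Hc'].
  { intros t Ht. rewrite <- Hc by exact Ht.
    apply iter_I1_Dom_not_I1; [lia|lia|exact Ht|intros; lia]. }
  exists c'. intros x Hx. rewrite iterT_S, Hc by exact Hx. apply Hc'. exact Hx.
Qed.

Lemma iter_n0_I1 x : I1 T x -> iterT T n0 x = a2 T + d - x.
Proof.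
  intros Hx. destruct (iter_I1_flip n0 n0_pos (le_n n0)) as [c Hc].
  destruct (frac_part_no_wrap c 0 (a1 T)) as [c0 Hc0].
  { intros t Ht. rewrite <- Hc by exact Ht. destruct (Req_dec t d) as [->|Htd].
    - rewrite d_hits_a2. lra.
    - destruct (iter_I1_Dom_not_I1 n0 t n0_pos n0_lt_N Ht (fun _ => Htd)) as [HD _].
      pose proof (Dom_range T cuts _ HD). lra. }
  pose proof d_I1 as Hd. unfold I1 in Hx, Hd.
  rewrite Hc, Hc0 by assumption. rewrite Hc, Hc0 in d_hits_a2 by assumption. lra.
Qed.

Lemma iter_n0_shift_ne j x : (1 <= j)%nat -> (n0 + j <= N)%nat -> I1 T x -> x <> d ->
  iterT T (n0 + j) x <> iterT T n0 x.
Proof.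
  intros Hj HjN Hx Hxd E.
  assert (HD : DomN T (n0 + j) x) by (apply iter_I1_DomN; auto).
  pose proof (DomN_le T n0 (n0 + j) x ltac:(lia) HD) as HDx.
  apply DomN_add in HD as [HDj HDn0]. rewrite iterT_add in E.
  apply (iterT_inj T n0) in E; [|exact HT|exact HDn0|exact HDx].
  apply (iter_I1_not_I1 j x); [lia|lia|exact Hx|exact HDj|]. rewrite E. exact Hx.
Qed.

Lemma glued_iter_step k k' u v u' v' c :
  (1 <= k)%nat -> (k < N)%nat -> (1 <= k')%nat -> (k' < N)%nat ->
  u < v -> u' < v' -> v - u <= a1 T ->
  (forall x, u < x < v -> I1 T x /\ x <> d) -> (forall x, u' < x < v' -> I1 T x /\ x <> d) ->
  frac_part c <> a2 T ->
  glued_arcs (iterT T k) (iterT T k') u v u' v' c ->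
  exists c', glued_arcs (iterT T (S k)) (iterT T (S k')) u v u' v' c'.
Proof.
  intros Hk HkN Hk' Hk'N Huv Huv' Hlen Hin Hin' Ha2 Hg.
  apply (glued_arcs_Tmap T cuts noflip2 noflip3 _ _ u v u' v' c); auto;
    intros x Hx; [destruct (Hin x Hx) | destruct (Hin' x Hx)];
    apply iter_I1_Dom_not_I1; auto.
Qed.

Lemma left_glued j : (1 <= j)%nat -> (n0 + j <= N)%nat ->
  exists c, glued_arcs (iterT T (n0 + j)) (iterT T j) 0 d 0 d c.
Proof.
  pose proof d_I1 as Hd. unfold I1 in Hd.
  induction j as [|j IH]; intros Hj HjN; [lia|].
  destruct (Nat.eq_dec j 0) as [->|Hj0].
  - destruct (Tmap_images_glued T cuts flip1 noflip2 noflip3 inj images_order) as [[z Hz] _].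
    exists (c1 T). split; intros x Hx.
    + pose proof (iterT_range T n0 x n0_pos) as Hr.
      rewrite Nat.add_1_r, iterT_S, iter_n0_I1 in * by (unfold I1; lra).
      rewrite (Tmap_I3 T cuts noflip3) by (unfold I3; lra). apply frac_part_eq_mod1. exists z. lra.
    + rewrite Rminus_0_r. apply (Tmap_I1 T flip1). unfold I1. lra.
  - destruct IH as [c Hc]; [lia|lia|].
    rewrite Nat.add_succ_r.
    apply (glued_iter_step _ _ 0 d 0 d c); [lia..|lra|lra|lra| | |intros E|exact Hc];
      try (intros x Hx; split; [unfold I1|]; lra).
    apply (iter_n0_shift_ne j (d / 2)); [lia|lia|unfold I1; lra|lra|].
    rewrite (proj1 Hc) by lra. rewrite <- frac_part_add_frac, E, iter_n0_I1 by (unfold I1; lra).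
    pose proof (iterT_range T n0 (d / 2) n0_pos) as Hr. rewrite iter_n0_I1 in Hr by (unfold I1; lra).
    rewrite frac_part_id by lra. ring.
Qed.

Lemma right_glued j : (1 <= j)%nat -> (n0 + j <= N)%nat ->
  exists c, glued_arcs (iterT T j) (iterT T (n0 + j)) d (a1 T) d (a1 T) c.
Proof.
  pose proof d_I1 as Hd. unfold I1 in Hd.
  induction j as [|j IH]; intros Hj HjN; [lia|].
  destruct (Nat.eq_dec j 0) as [->|Hj0].
  - destruct (Tmap_images_glued T cuts flip1 noflip2 noflip3 inj images_order) as [_ [z Hz]].
    exists (c1 T - a1 T). split; intros x Hx.
    + change (Tmap T x = frac_part (c1 T - a1 T + (a1 T - x))).
      rewrite (Tmap_I1 T flip1) by (unfold I1; lra). f_equal. ring.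
    + assert (Hx1 : I1 T x) by (unfold I1; lra).
      destruct (iter_I1_Dom_not_I1 n0 x n0_pos n0_lt_N Hx1 (fun _ => ltac:(lra))) as [HD HnI1].
      rewrite Nat.add_1_r, iterT_S, iter_n0_I1 in * by exact Hx1.
      rewrite (Tmap_I2 T noflip2) by (destruct HD as [?|[?|?]]; unfold I1, I2, I3 in *; lra).
      apply frac_part_eq_mod1. exists z. lra.
  - destruct IH as [c Hc]; [lia|lia|].
    rewrite Nat.add_succ_r.
    apply (glued_iter_step _ _ d (a1 T) d (a1 T) c); [lia..|lra|lra|lra| | |intros E|exact Hc];
      try (intros x Hx; split; [unfold I1|]; lra).
    set (m := (d + a1 T) / 2).
    apply (iter_n0_shift_ne j m); [lia|lia|unfold I1, m; lra|unfold m; lra|].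
    rewrite (proj2 Hc) by (unfold m; lra).
    unfold Rminus at 1. rewrite <- frac_part_add_frac, E, iter_n0_I1 by (unfold I1, m; lra).
    pose proof (iterT_range T n0 m n0_pos) as Hr. rewrite iter_n0_I1 in Hr by (unfold I1, m; lra).
    rewrite frac_part_id by lra. ring.
Qed.

Lemma iter_I1_DomN_N x : I1 T x -> x <> d -> DomN T N x.
Proof. intros Hx Hxd. apply iter_I1_DomN; [lia|exact Hx|intros _; exact Hxd]. Qed.

Lemma iter_N_no_fixed_point x : I1 T x -> x <> d -> iterT T N x <> x.
Proof.
  intros Hx Hxd E. apply no_periodic. exists x, N.
  split; [lia|]. split; [apply iter_I1_DomN_N; assumption|exact E].
Qed.

Lemma left_return x0 : 0 < x0 < d -> I1 T (iterT T N x0) ->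
  img T N (fun x => 0 < x < d) 0.
Proof.
  pose proof d_I1 as Hd. unfold I1 in Hd. intros Hx0 Hret.
  destruct (left_glued (N - n0)) as [c [EN EM]]; [lia|lia|].
  replace (n0 + (N - n0))%nat with N in EN by lia.
  pose proof (frac_part_range c) as Hp. set (p := frac_part c) in Hp.
  assert (EN' : forall x, 0 < x < d -> iterT T N x = frac_part (p + (d - x)))
    by (intros x Hx; rewrite EN by exact Hx; unfold p; rewrite frac_part_add_frac; reflexivity).
  assert (EM' : forall x, 0 < x < d -> iterT T (N - n0) x = frac_part (p - x))
    by (intros x Hx; rewrite EM by exact Hx; unfold p; rewrite frac_part_sub_frac, Rminus_0_r;
        reflexivity).
  assert (Hpa1 : a1 T < p).
  { apply Rnot_le_lt. intros Hle. destruct (Req_dec p 0) as [Hp0|Hp0].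
    - apply (iter_N_no_fixed_point (d / 2)); [unfold I1; lra|lra|].
      rewrite EN', Hp0, Rplus_0_l, frac_part_id; lra.
    - destruct (Rpos_min p d) as (e & He & Hep & Hed); [lra|lra|].
      apply (iter_I1_not_I1 (N - n0) (e / 2)); [lia|lia|unfold I1; lra| |].
      + apply (DomN_le T _ N); [lia|]. apply iter_I1_DomN_N; [unfold I1|]; lra.
      + rewrite EM', frac_part_id; unfold I1; lra. }
  assert (Hwrap : 1 <= p + (d - x0)).
  { apply Rnot_lt_le. intros Hlt. rewrite EN', frac_part_id in Hret by lra.
    unfold I1 in Hret. lra. }
  exists (p + d - 1). split; [lra|]. split; [apply iter_I1_DomN_N; [unfold I1|]; lra|].
  rewrite EN' by lra. replace (p + (d - (p + d - 1))) with (0 + IZR 1) by (simpl; ring).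
  rewrite frac_part_add_int. apply fp_R0.
Qed.

Lemma right_return x0 : d < x0 < a1 T -> I1 T (iterT T N x0) ->
  img T N (fun x => d < x < a1 T) (a1 T).
Proof.
  pose proof d_I1 as Hd. unfold I1 in Hd. intros Hx0 Hret.
  destruct (right_glued (N - n0)) as [c [EM EN]]; [lia|lia|].
  replace (n0 + (N - n0))%nat with N in EN by lia.
  pose proof (frac_part_range c) as Hq. set (q := frac_part c) in Hq.
  assert (EN' : forall x, d < x < a1 T -> iterT T N x = frac_part (q - (x - d)))
    by (intros x Hx; rewrite EN by exact Hx; unfold q; rewrite frac_part_sub_frac; reflexivity).
  assert (EM' : forall x, d < x < a1 T -> iterT T (N - n0) x = frac_part (q + (a1 T - x)))
    by (intros x Hx; rewrite EM by exact Hx; unfold q; rewrite frac_part_add_frac; reflexivity).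
  assert (Hqa1 : a1 T < q).
  { apply Rnot_le_lt. intros Hle. destruct (Req_dec q (a1 T)) as [Hq1|Hq1].
    - set (m := (d + a1 T) / 2).
      apply (iter_N_no_fixed_point m); [unfold I1, m; lra|unfold m; lra|].
      rewrite EN', Hq1, frac_part_id; unfold m; lra.
    - destruct (Rpos_min (a1 T - q) (a1 T - d)) as (e & He & Heq & Hed); [lra|lra|].
      apply (iter_I1_not_I1 (N - n0) (a1 T - e / 2)); [lia|lia|unfold I1; lra| |].
      + apply (DomN_le T _ N); [lia|]. apply iter_I1_DomN_N; [unfold I1|]; lra.
      + rewrite EM', frac_part_id; unfold I1; lra. }
  assert (Hnowrap : q < 2 * a1 T - d).
  { apply Rnot_le_lt. intros Hge. rewrite EN', frac_part_id in Hret by lra.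
    unfold I1 in Hret. lra. }
  exists (q + d - a1 T). split; [lra|]. split; [apply iter_I1_DomN_N; [unfold I1|]; lra|].
  rewrite EN', frac_part_id by lra. ring.
Qed.

Lemma first_return_hits_cut : meets (img T N (I1 T)) (I1 T) ->
  img T N (fun x => 0 < x < d) 0 \/ img T N (fun x => d < x < a1 T) (a1 T).
Proof.
  intros (y & (x0 & Hx0 & HD & <-) & Hret).
  assert (Hx0d : x0 <> d).
  { intros ->. apply (not_Dom_a2 T cuts). rewrite <- d_hits_a2. exact (HD n0 n0_lt_N). }
  unfold I1 in Hx0.
  destruct (Rtotal_order x0 d) as [Hlt|[Heq|Hgt]]; [left|contradiction|right].
  - apply (left_return x0); [lra|exact Hret].
  - apply (right_return x0); [lra|exact Hret].
Qed.

End FirstReturn.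

Theorem lemma3p4 (T : CET3) (N n0 : nat) (d : R) :
  is_CET3 T ->
  fl1 T = true -> fl2 T = false -> fl3 T = false ->
  cyc_sets (img T 1 (I1 T)) (img T 1 (I3 T)) (img T 1 (I2 T)) ->
  ~ has_periodic_point T ->
  (2 <= N)%nat ->
  meets (img T N (I1 T)) (I1 T) ->
  (forall n, (1 <= n)%nat -> (n < N)%nat -> ~ meets (img T n (I1 T)) (I1 T)) ->
  (1 <= n0)%nat -> (n0 <= N - 1)%nat ->
  I1 T d -> DomN T n0 d -> iterT T n0 d = a2 T ->
  img T N (fun x => 0 < x < d) 0 \/ img T N (fun x => d < x < a1 T) (a1 T).
Proof.
  intros HT Hfl1 Hfl2 Hfl3 Hcyc Hper HN Hmeet Hmin Hn0 Hn0N Hd HdD Hdv.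
  apply (first_return_hits_cut T N n0 d); auto. lia.
Qed.
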